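(* Let $T\in\mathrm{Aut}(X,\mu)$ be an aperiodic transformation with infinite dynamical entropy and let $U\in[T]$ be such that the $T$-cocycle of $U$ has finite Shannon entropy. Then $U$ has infinite dynamical entropy. Consequently, if two aperiodic transformations are Shannon orbit equivalent, one has finite dynamical entropy if and only if the other does.
   Context: $(X,\mu)$ is a standard atomless probability space, $\mathrm{Aut}(X,\mu)$ its group of measure-preserving transformations modulo null sets. For aperiodic $T$, $[T]$ is the set of $U\in\mathrm{Aut}(X,\mu)$ with $U(x)=T^{c_U(x)}(x)$ for a (unique) measurable $c_U:X\to\mathbb Z$, the $T$-cocycle. The Shannon entropy of measurable $f:X\to I$, $I$ countable, is $H(f)=-\sum_i\mu(f^{-1}\{i\})\log\mu(f^{-1}\{i\})$. A measurable $f:X\to I$ ($I$ countable) is $T$-dynamically generating if there is a conull $X_0$ such that for all distinct $x,y\in X_0$ there is $n\in\mathbb Z$ with $f(T^nx)\ne f(T^ny)$. The dynamical entropy of $T$ is the infimum of $H(f)$ over $T$-dynamically generating $f$. Shannon orbit equivalence of aperiodic $T_1,T_2$: there is $S\in\mathrm{Aut}(X,\mu)$ with $ST_1S^{-1}$, $T_2$ having the same orbits and both cocycles ($T_2$-cocycle of $ST_1S^{-1}$, $ST_1S^{-1}$-cocycle of $T_2$) of finite Shannon entropy. *)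

From HB Require Import structures.
From mathcomp Require Import all_boot all_order all_algebra.
From mathcomp Require Import all_classical all_reals all_analysis.
Set Implicit Arguments. Unset Strict Implicit. Unset Printing Implicit Defensive.
Import Order.TTheory GRing.Theory Num.Theory.
Local Open Scope classical_set_scope.
Local Open Scope ring_scope.

Section Defs.
Context {R : realType} {d : measure_display} {X : measurableType d}.
Variable mu : probability X R.

Definition ae_holds (P : X -> Prop) : Prop := mu.-negligible [set x | ~ P x].

(** (X, mu) is a standard atomless probability space: it is isomorphic mod 0
    to the unit interval with Lebesgue measure. *)
Definition standard_atomless : Prop :=
  exists (phi : X -> R) (psi : R -> X),
    [/\ measurable_fun setT phi,
        measurable_fun (`[0%R, 1%R] : set (measurableTypeR R)) psi,
        (forall A : set (measurableTypeR R), measurable A ->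
           mu (phi @^-1` A) = lebesgue_measure (A `&` `[0%R, 1%R])),
        ae_holds (fun x => psi (phi x) = x) &
        (lebesgue_measure).-negligible
           [set t : R | t \in `[0%R, 1%R] /\ phi (psi t) <> t] ].

(** A measure-preserving transformation, represented by a genuine measurable
    bijection T with measurable inverse Ti (every element of Aut(X,mu) has
    such a representative). *)
Definition mp_aut (T Ti : X -> X) : Prop :=
  [/\ measurable_fun setT T, measurable_fun setT Ti,
      cancel T Ti, cancel Ti T &
      forall A, measurable A -> mu (T @^-1` A) = mu A].

Definition zpow (T Ti : X -> X) (n : int) (x : X) : X :=
  match n with
  | Posz k => iter k T x
  | Negz k => iter k.+1 Ti x
  end.

Definition aperiodic (T Ti : X -> X) : Prop :=
  ae_holds (fun x => forall n : int, n != 0 -> zpow T Ti n x <> x).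

Definition cmeasurable (I : countType) (f : X -> I) : Prop :=
  forall i : I, measurable (f @^-1` [set i]).

Definition ent_term (p : R) : R := if p == 0 then 0 else - (p * ln p).

Definition shannon (I : countType) (f : X -> I) : \bar R :=
  (\esum_(i in [set: I]) (ent_term (fine (mu (f @^-1` [set i]))))%:E)%R.

Definition dyn_generating (T Ti : X -> X) (I : countType) (f : X -> I) : Prop :=
  exists X0 : set X, mu.-negligible (~` X0) /\
    forall x y, X0 x -> X0 y -> x <> y ->
      exists n : int, f (zpow T Ti n x) <> f (zpow T Ti n y).

Definition dyn_entropy (T Ti : X -> X) : \bar R :=
  ereal_inf [set e | exists (I : countType) (f : X -> I),
     [/\ cmeasurable f, dyn_generating T Ti f & e = shannon f]].

Definition is_cocycle (T Ti U : X -> X) (c : X -> int) : Prop :=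
  cmeasurable c /\ ae_holds (fun x => U x = zpow T Ti (c x) x).

Definition in_full_group (T Ti U : X -> X) : Prop :=
  exists c : X -> int, is_cocycle T Ti U c.

Definition same_orbits (T Ti U Ui : X -> X) : Prop :=
  ae_holds (fun x => forall y, (exists n, zpow T Ti n x = y) <->
                               (exists m, zpow U Ui m x = y)).

Definition shannon_oe (T1 T1i T2 T2i : X -> X) : Prop :=
  exists S Si : X -> X, mp_aut S Si /\
    let T1' := S \o T1 \o Si in
    let T1'i := S \o T1i \o Si in
    [/\ same_orbits T1' T1'i T2 T2i,
        exists c : X -> int, is_cocycle T2 T2i T1' c /\ (shannon c < +oo)%E &
        exists c : X -> int, is_cocycle T1' T1'i T2 c /\ (shannon c < +oo)%E].

End Defs.

(* If f generates U and c is the T-cocycle of U, then (f, c) generates T: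
   two points whose T-orbits carry the same values of f and c move in lockstep
   under U (each U-step is the same power of T on both), so they have the same
   f-itinerary under U and must coincide.  Moreover the joint partition has
   H(f, c) <= H(f) + H(c) + 1, from the pointwise bound
   -r ln r <= -r ln p - r ln q + p q for r = mu(A_i /\ B_j), p = mu(A_i),
   q = mu(B_j).  Hence finite dynamical entropy passes from U to T.  Since
   conjugating by an automorphism does not change dynamical entropy, applying
   this in both directions of a Shannon orbit equivalence gives the second
   claim. *)

From HB Require Import structures.
From mathcomp Require Import all_boot all_order all_algebra.
From mathcomp Require Import all_classical all_reals all_analysis.
From mathcomp Require Import zify lra.

Set Implicit Arguments. Unset Strict Implicit. Unset Printing Implicit Defensive.
Import Order.TTheory GRing.Theory Num.Theory.
Local Open Scope classical_set_scope.
Local Open Scope ring_scope.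

Section ZAction.
Variables (d : measure_display) (X : measurableType d) (T Ti : X -> X).
Hypotheses (TK : cancel T Ti) (TiK : cancel Ti T).

Lemma zpowS (n : int) x : zpow T Ti (n + 1) x = T (zpow T Ti n x).
Proof.
case: n => [k|[|k]]; first by have -> : Posz k + 1 = Posz k.+1 by lia.
  by rewrite /= TiK.
have -> : Negz k.+1 + 1 = Negz k by rewrite !NegzE; lia.
by rewrite /= TiK.
Qed.

Lemma zpowB1 (n : int) x : zpow T Ti (n - 1) x = Ti (zpow T Ti n x).
Proof. by rewrite -[in RHS](subrK 1 n) zpowS TK. Qed.

Lemma zpowD (a b : int) x : zpow T Ti a (zpow T Ti b x) = zpow T Ti (a + b) x.
Proof.
case: a => [k|k]; elim: k => [|k IH].
- by rewrite add0r.
- have -> : Posz k.+1 + b = (Posz k + b) + 1 by lia.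
  by rewrite zpowS -IH.

- have -> : Negz 0 + b = b - 1 by rewrite NegzE; lia.
  by rewrite zpowB1.
- have -> : Negz k.+1 + b = (Negz k + b) - 1 by rewrite !NegzE; lia.
  by rewrite zpowB1 -IH.
Qed.

Lemma zpowK (a : int) x : zpow T Ti (- a) (zpow T Ti a x) = x.
Proof. by rewrite zpowD addNr. Qed.

Lemma zpow_conj (S Si : X -> X) : cancel S Si -> cancel Si S ->
  forall n x, zpow (S \o T \o Si) (S \o Ti \o Si) n x = S (zpow T Ti n (Si x)).
Proof.
move=> SK SiK; have iter_conj F k x : iter k (S \o F \o Si) x = S (iter k F (Si x)).
  by elim: k x => [|k IH] x /=; rewrite ?SiK // IH SK.
by case=> k x; rewrite /zpow iter_conj.
Qed.

End ZAction.

Section NullSets.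
Variables (R : realType) (d : measure_display) (X : measurableType d).
Variable mu : probability X R.

Lemma measurable_preimage (F : X -> X) (A : set X) :
  measurable_fun setT F -> measurable A -> measurable (F @^-1` A).
Proof. by move=> mF mA; rewrite -[_ @^-1` _]setTI; apply: mF. Qed.

Lemma mp_aut_inv_preserving (T Ti : X -> X) : mp_aut mu T Ti ->
  forall A, measurable A -> mu (Ti @^-1` A) = mu A.
Proof.
case=> mT mTi TK TiK Tp A mA.
rewrite -Tp; last exact: measurable_preimage.
by congr (mu _); apply/seteqP; split => x /=; rewrite TK.
Qed.

Lemma mp_aut_sym (T Ti : X -> X) : mp_aut mu T Ti -> mp_aut mu Ti T.
Proof. by move=> hT; have := mp_aut_inv_preserving hT; case: hT. Qed.

Lemma mp_aut_conj (S Si T Ti : X -> X) : mp_aut mu S Si -> mp_aut mu T Ti ->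
  mp_aut mu (S \o T \o Si) (S \o Ti \o Si).
Proof.
move=> hS [mT mTi TK TiK Tp]; have Sip := mp_aut_inv_preserving hS.
case: hS => mS mSi SK SiK Sp; split.
- by apply: measurableT_comp => //; apply: measurableT_comp.
- by apply: measurableT_comp => //; apply: measurableT_comp.
- by move=> x /=; rewrite SK TK SiK.
- by move=> x /=; rewrite SK TiK SiK.
- move=> A mA.
  have -> : (S \o T \o Si) @^-1` A = Si @^-1` (T @^-1` (S @^-1` A)) by [].
  rewrite Sip; last by do 2 apply: measurable_preimage => //.
  by rewrite Tp ?Sp //; apply: measurable_preimage.
Qed.

Lemma negligible_preimage (F : X -> X) (N : set X) : measurable_fun setT F ->
  (forall A, measurable A -> mu (F @^-1` A) = mu A) ->
  mu.-negligible N -> mu.-negligible (F @^-1` N).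
Proof.
move=> mF Fp [B [mB B0 NB]]; exists (F @^-1` B); split.
- exact: measurable_preimage.
- by rewrite Fp.
- by move=> x /NB.
Qed.

Lemma negligible_preimage_zpow (T Ti : X -> X) (N : set X) n : mp_aut mu T Ti ->
  mu.-negligible N -> mu.-negligible (zpow T Ti n @^-1` N).
Proof.
move=> hT; have Tip := mp_aut_inv_preserving hT; case: hT => mT mTi _ _ Tp.
have iterN F k M : measurable_fun setT F ->
    (forall A, measurable A -> mu (F @^-1` A) = mu A) ->
    mu.-negligible M -> mu.-negligible (iter k F @^-1` M).
  move=> mF Fp; elim: k M => [|k IH] M hM //.
  exact: (IH (F @^-1` M) (negligible_preimage mF Fp hM)).
by case: n => k; apply: iterN.
Qed.

Lemma negligible_bigcup_int (F : int -> set X) :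
  (forall n, mu.-negligible (F n)) -> mu.-negligible (\bigcup_n F n).
Proof.
move=> hF; apply: (@negligibleS _ _ _ mu
  ((\bigcup_k F (Posz k)) `|` (\bigcup_k F (Negz k)))).
  by move=> x [[k|k] _ Fx]; [left|right]; exists k.
by apply: negligibleU; apply: negligible_bigcup => k; apply: hF.
Qed.

End NullSets.

Lemma ent_termE (R : realType) (p : R) : ent_term p = p * - ln p.
Proof. by rewrite /ent_term; case: eqP => [->|]; rewrite ?mul0r ?mulrN. Qed.

(* From [ln t <= t - 1] at [t = p q / r]. *)
Lemma ent_term_le (R : realType) (r p q : R) : 0 <= r -> r <= p -> r <= q ->
  ent_term r <= r * - ln p + r * - ln q + p * q.
Proof.
move=> r0 rp rq; rewrite ent_termE; have [->|rn0] := eqVneq r 0.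
  by rewrite !mul0r !add0r; apply: mulr_ge0; lra.
have rpos : 0 < r by rewrite lt_neqAle eq_sym rn0.
have [pp qp] : 0 < p /\ 0 < q by split; lra.
have t0 : 0 < p * q / r by rewrite divr_gt0 // mulr_gt0.
have ln_le : ln (p * q / r) <= p * q / r - 1.
  by have := expR_ge1Dx (ln (p * q / r)); rewrite lnK ?posrE //; lra.
have lnE : ln (p * q / r) = ln p + ln q - ln r.
  by rewrite lnM ?posrE ?mulr_gt0 ?invr_gt0 // lnM ?posrE // lnV ?posrE.
have : r * (ln p + ln q - ln r) <= p * q - r.
  rewrite -lnE; have := ler_wpM2l (ltW rpos) ln_le.
  by rewrite mulrBr mulr1 mulrCA mulrV ?mulr1 ?unitfE.
nra.
Qed.

Section Entropy.
Variables (R : realType) (d : measure_display) (X : measurableType d).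
Variable mu : probability X R.
Local Notation P A := (fine (mu A)).

Lemma probability_fineK (A : set X) : measurable A -> (P A)%:E = mu A.
Proof. by move=> mA; rewrite fineK// fin_num_measure. Qed.

Lemma fine_probability_ge0 (A : set X) : 0 <= P A.
Proof. exact/fine_ge0/measure_ge0. Qed.

Lemma fine_probability_le1 (A : set X) : measurable A -> P A <= 1.
Proof. by move=> mA; rewrite -lee_fin probability_fineK // probability_le1. Qed.

Lemma oppr_ln_probability_ge0 (A : set X) : measurable A -> 0 <= - ln (P A).
Proof. by move=> mA; rewrite oppr_ge0 ln_le0 // fine_probability_le1. Qed.

Lemma esum_disjoint_le (J : choiceType) (F : J -> set X) (A : set X) (a : R) :
  0 <= a -> measurable A -> (forall j, measurable (F j)) ->
  (forall j, F j `<=` A) -> trivIset setT F ->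
  (\esum_(j in [set: J]) (a * P (F j))%:E <= (a * P A)%:E)%E.
Proof.
move=> a0 mA mF FA tF; apply: ge_ereal_sup => _ [Y [finY _] <-].
rewrite (eq_fsbigr (fun j => (a%:E * mu (F j))%E)); last first.
  by move=> j _; rewrite EFinM probability_fineK.
rewrite -ge0_mule_fsumr; last by move=> j; apply: measure_ge0.
rewrite -measure_fin_bigcup//; last exact: sub_trivIset tF.
rewrite EFinM probability_fineK //; apply: lee_wpmul2l; first by rewrite lee_fin.
apply: le_measure; rewrite ?inE //; first exact: fin_bigcup_measurable.
by move=> x [j _ /FA].
Qed.

Lemma esum_pair_disjoint_le (I J : choiceType) (F : I -> J -> set X)
    (A : I -> set X) (a : I -> R) :
  (forall i, 0 <= a i) -> (forall i, measurable (A i)) ->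
  (forall i j, measurable (F i j)) -> (forall i j, F i j `<=` A i) ->
  (forall i, trivIset setT (F i)) ->
  (\esum_(k in [set: I * J]) (a k.1 * P (F k.1 k.2))%:E <=
   \esum_(i in [set: I]) (a i * P (A i))%:E)%E.
Proof.
move=> a0 mA mF FA tF.
have -> : [set: I * J] = [set: I] `*`` (fun _ => [set: J]) by apply/seteqP.
rewrite -(esum_esum (a := fun i j => (a i * P (F i j))%:E)); last first.
  by move=> i j _ _; rewrite lee_fin mulr_ge0 // fine_probability_ge0.
by apply: le_esum => i _; apply: esum_disjoint_le.
Qed.

Lemma esum_swap (I J : choiceType) (h : I * J -> \bar R) :
  \esum_(k in [set: I * J]) h k = \esum_(k in [set: J * I]) h (k.2, k.1).
Proof.
apply: (reindex_esum [set: J * I] [set: I * J] (fun k : J * I => (k.2, k.1)) h).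
by rewrite setTT_bijective; exists (fun k : I * J => (k.2, k.1)); case.
Qed.

Lemma trivIset_fibers (K : countType) (g : X -> K) :
  trivIset setT (fun k => g @^-1` [set k]).
Proof. by move=> k k' _ _ [x [/= <- <-]]. Qed.

Lemma esum_joint_cross_le (I J : countType) (f : X -> I) (c : X -> J) :
  cmeasurable f -> cmeasurable c ->
  (\esum_(k in [set: I * J])
     (P (f @^-1` [set k.1] `&` c @^-1` [set k.2]) * - ln (P (f @^-1` [set k.1])))%:E
   <= shannon mu f)%E.
Proof.
move=> mf mc; rewrite (eq_esum (b := fun k => (- ln (P (f @^-1` [set k.1])) *
  P (f @^-1` [set k.1] `&` c @^-1` [set k.2]))%:E)); last by move=> k _; rewrite mulrC.
apply: (le_trans (esum_pair_disjoint_le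
  (F := fun i j => f @^-1` [set i] `&` c @^-1` [set j])
  (fun i => oppr_ln_probability_ge0 (mf i)) mf _ (fun i j => @subIsetl _ _ _) _)).
- by move=> i j; apply: measurableI.
- by move=> i j j' _ _ [x [[_ /= <-] [_ /= <-]]].
- by apply: le_esum => i _; rewrite ent_termE mulrC.
Qed.

Lemma esum_joint_product_le1 (I J : countType) (f : X -> I) (c : X -> J) :
  cmeasurable f -> cmeasurable c ->
  (\esum_(k in [set: I * J]) (P (f @^-1` [set k.1]) * P (c @^-1` [set k.2]))%:E
   <= 1)%E.
Proof.
move=> mf mc; apply: (le_trans (esum_pair_disjoint_le (F := fun _ j => c @^-1` [set j])
  (A := fun _ => setT) (fun i => fine_probability_ge0 (f @^-1` [set i]))
  (fun=> measurableT) (fun _ => mc) (fun i j => @subsetT _ _)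
  (fun=> @trivIset_fibers _ c))).
rewrite probability_setT (eq_esum (b := fun i => (1 * P (f @^-1` [set i]))%:E));
  last by move=> i _; rewrite mulr1 mul1r.
have := esum_disjoint_le ler01 measurableT mf (fun i => @subsetT _ _)
  (@trivIset_fibers _ f).
by rewrite probability_setT mul1r.
Qed.

Lemma shannon_joint_lt (I J : countType) (f : X -> I) (c : X -> J) :
  cmeasurable f -> cmeasurable c ->
  (shannon mu f < +oo)%E -> (shannon mu c < +oo)%E ->
  (shannon mu (fun x => (f x, c x)) < +oo)%E.
Proof.
move=> mf mc hf hc; pose A i := f @^-1` [set i]; pose B j := c @^-1` [set j].
have [mA mB] : (forall i, measurable (A i)) /\ (forall j, measurable (B j)) by [].
have mAB k : measurable (A k.1 `&` B k.2) by apply: measurableI.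
have preE k : (fun x => (f x, c x)) @^-1` [set k] = A k.1 `&` B k.2.
  by case: k => i j; apply/seteqP; split => x; rewrite /A /B /= => -[-> ->].
have ge0 k (a : R) : 0 <= a -> (0 <= (P (A k.1 `&` B k.2) * a)%:E)%E.
  by move=> a0; rewrite lee_fin mulr_ge0 // fine_probability_ge0.
apply: (le_lt_trans (y := (\esum_(k in [set: I * J])
   ((P (A k.1 `&` B k.2) * - ln (P (A k.1)))%:E +
    (P (A k.1 `&` B k.2) * - ln (P (B k.2)))%:E +
    (P (A k.1) * P (B k.2))%:E))%E)).
  apply: le_esum => k _; rewrite preE -!EFinD lee_fin.
  apply: ent_term_le; first exact: fine_probability_ge0.
  - by rewrite -lee_fin !probability_fineK //; apply: le_measure; rewrite ?inE.
  - by rewrite -lee_fin !probability_fineK //; apply: le_measure; rewrite ?inE.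
rewrite esumD; first last.
- by move=> k _; rewrite lee_fin mulr_ge0 // fine_probability_ge0.
- by move=> k _; rewrite adde_ge0 // ge0 // oppr_ln_probability_ge0.
rewrite esumD; first last.
- by move=> k _; rewrite ge0 // oppr_ln_probability_ge0.
- by move=> k _; rewrite ge0 // oppr_ln_probability_ge0.
apply: lte_add_pinfty; first apply: lte_add_pinfty.
- exact: le_lt_trans (esum_joint_cross_le mf mc) hf.
- rewrite esum_swap; apply: le_lt_trans hc.
  under eq_esum do rewrite setIC.
  exact: esum_joint_cross_le.
- exact: le_lt_trans (esum_joint_product_le1 mf mc) (ltry _).
Qed.

End Entropy.

Section CocycleOrbits.
Variables (d : measure_display) (X : measurableType d) (T Ti U Ui : X -> X).
Variable c : X -> int.
Hypotheses (TK : cancel T Ti) (TiK : cancel Ti T) (UK : cancel U Ui) (UiK : cancel Ui U).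

Local Notation zT := (zpow T Ti).
Let cocycle_at x := U x = zT (c x) x.

Lemma zpow_cocycle_sync (x y : X) :
  (forall n, cocycle_at (zT n x)) -> (forall n, cocycle_at (Ui (zT n x))) ->
  (forall n, cocycle_at (zT n y)) -> (forall n, c (zT n x) = c (zT n y)) ->
  forall k, exists m, zpow U Ui k x = zT m x /\ zpow U Ui k y = zT m y.
Proof.
move=> Cx Dx Cy cxy.
have back m : exists m', Ui (zT m x) = zT m' x /\ Ui (zT m y) = zT m' y.
  set z := Ui (zT m x); have zE : z = zT (- c z + m) x.
    by rewrite -zpowD // -(UiK (zT m x)) -/z Dx zpowK.
  exists (- c z + m); split => //.
  apply: (can_inj UK); rewrite UiK Cy -cxy -zE zpowD //.
  by congr (zT _ y); lia.
case=> k; elim: k => [|k [m [hx hy]]]; first by exists 0.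
- exists (c (zT m x) + m).
  change (U (zpow U Ui k x) = zT (c (zT m x) + m) x /\
          U (zpow U Ui k y) = zT (c (zT m x) + m) y).
  by rewrite hx hy Cx Cy -cxy !zpowD.
- exact: (back 0).
- have [m' hm'] := back m; exists m'.
  by change (Ui (zpow U Ui (Negz k) x) = zT m' x /\
            Ui (zpow U Ui (Negz k) y) = zT m' y); rewrite hx hy.
Qed.

End CocycleOrbits.

Section FullGroup.
Variables (R : realType) (d : measure_display) (X : measurableType d).
Variable mu : probability X R.

Lemma joint_generating (T Ti U Ui : X -> X) (c : X -> int) (I : countType)
    (f : X -> I) :
  mp_aut mu T Ti -> mp_aut mu U Ui -> is_cocycle mu T Ti U c ->
  dyn_generating mu U Ui f -> dyn_generating mu T Ti (fun x => (f x, c x)).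
Proof.
move=> hT hU [_ hc] [X0 [nX0 hX0]].
have [_ _ TK TiK _] := hT; have [_ _ UK UiK _] := hU.
pose cocycle_at x := U x = zpow T Ti (c x) x.
pose G := [set x | [/\ X0 x, forall n, cocycle_at (zpow T Ti n x) &
                            forall n, cocycle_at (Ui (zpow T Ti n x))]].
exists G; split.
  apply: (@negligibleS _ _ _ mu (~` X0 `|`
    \bigcup_n (zpow T Ti n @^-1` ~` cocycle_at) `|`
    \bigcup_n (zpow T Ti n @^-1` (Ui @^-1` ~` cocycle_at)))).
    move=> x /= /not_and3P[nx|/existsNP[n hn]|/existsNP[n hn]].
    + by do 2 left.
    + by left; right; exists n.
    + by right; exists n.
  apply: negligibleU; first apply: negligibleU => //.
    by apply: negligible_bigcup_int => n; apply: negligible_preimage_zpow.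
  apply: negligible_bigcup_int => n; apply: negligible_preimage_zpow => //.
  have [mU mUi _ _ _] := hU.
  exact: negligible_preimage mUi (mp_aut_inv_preserving hU) hc.
move=> x y [X0x Cx Dx] [X0y Cy _] nxy; apply: contrapT => hsame.
have agree n : (f (zpow T Ti n x), c (zpow T Ti n x)) =
               (f (zpow T Ti n y), c (zpow T Ti n y)).
  by apply: contrapT => ne; apply: hsame; exists n.
have [k hk] := hX0 x y X0x X0y nxy; apply: hk.
have [m [-> ->]] := zpow_cocycle_sync TK TiK UK UiK Cx Dx Cy
  (fun n => f_equal snd (agree n)) k.
by case: (agree m).
Qed.

Lemma dyn_entropy_lt_pinfty_cocycle (T Ti U Ui : X -> X) (c : X -> int) :
  mp_aut mu T Ti -> mp_aut mu U Ui -> is_cocycle mu T Ti U c ->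
  (shannon mu c < +oo)%E ->
  (dyn_entropy mu U Ui < +oo)%E -> (dyn_entropy mu T Ti < +oo)%E.
Proof.
move=> hT hU hcoc hc /ereal_inf_lt[_ [I [f [mf gf ->]]] hf].
have mc : cmeasurable c by case: hcoc.
apply: le_lt_trans (shannon_joint_lt mf mc hf hc).
apply: ereal_inf_lbound; exists _, (fun x => (f x, c x)); split => //.
  case=> i j; have -> : (fun x => (f x, c x)) @^-1` [set (i, j)] =
      f @^-1` [set i] `&` c @^-1` [set j].
    by apply/seteqP; split => x /= => -[-> ->].
  exact: measurableI.
exact: joint_generating hT hU hcoc gf.
Qed.

Lemma dyn_entropy_conj_le (S Si T Ti : X -> X) : mp_aut mu S Si ->
  (dyn_entropy mu (S \o T \o Si) (S \o Ti \o Si) <= dyn_entropy mu T Ti)%E.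
Proof.
move=> hS; have Sip := mp_aut_inv_preserving hS.
have [mS mSi SK SiK _] := hS.
apply: le_ereal_inf_tmp => _ [I [f [mf [X0 [nX0 hX0]] ->]]].
apply: ereal_inf_lbound; exists I, (f \o Si); split.
- by move=> i; exact: measurable_preimage mSi (mf i).
- exists (Si @^-1` X0); split; first exact: negligible_preimage mSi Sip nX0.
  move=> x y hx hy nxy.
  have [n hn] := hX0 _ _ hx hy (fun e => nxy (can_inj SiK e)).
  by exists n; rewrite /= !zpow_conj //= !SK.
- by apply: eq_esum => i _; rewrite comp_preimage Sip.
Qed.

Lemma dyn_entropy_conj (S Si T Ti : X -> X) : mp_aut mu S Si ->
  dyn_entropy mu (S \o T \o Si) (S \o Ti \o Si) = dyn_entropy mu T Ti.
Proof.
move=> hS; apply/eqP; rewrite eq_le dyn_entropy_conj_le //=.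
have [_ _ SK _ _] := hS.
have unconj (F : X -> X) : Si \o (S \o F \o Si) \o S = F.
  by apply: funext => x /=; rewrite !SK.
by have := dyn_entropy_conj_le (S \o T \o Si) (S \o Ti \o Si) (mp_aut_sym hS);
  rewrite !unconj.
Qed.

End FullGroup.

Theorem mainTheorem6 (R : realType) (d : measure_display) (X : measurableType d)
  (mu : probability X R) (Hstd : standard_atomless mu) :
  (forall (T Ti U Ui : X -> X) (c : X -> int),
     mp_aut mu T Ti -> aperiodic mu T Ti -> dyn_entropy mu T Ti = +oo%E ->
     mp_aut mu U Ui -> is_cocycle mu T Ti U c -> (shannon mu c < +oo)%E ->
     dyn_entropy mu U Ui = +oo%E)
  /\
  (forall (T1 T1i T2 T2i : X -> X),
     mp_aut mu T1 T1i -> aperiodic mu T1 T1i ->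
     mp_aut mu T2 T2i -> aperiodic mu T2 T2i ->
     shannon_oe mu T1 T1i T2 T2i ->
     ((dyn_entropy mu T1 T1i < +oo)%E <-> (dyn_entropy mu T2 T2i < +oo)%E)).
Proof.
split.
  move=> T Ti U Ui c hT _ hTinf hU hcoc hc.
  have := dyn_entropy_lt_pinfty_cocycle hT hU hcoc hc; rewrite hTinf ltxx ltey.
  by move/contraT/eqP.
move=> T1 T1i T2 T2i hT1 _ hT2 _ [S [Si [hS /= [_ [c1 [hc1 f1]] [c2 [hc2 f2]]]]]].
have hT1' := mp_aut_conj hS hT1.
rewrite -(dyn_entropy_conj T1 T1i hS); split.
- exact: dyn_entropy_lt_pinfty_cocycle hT2 hT1' hc1 f1.
- exact: dyn_entropy_lt_pinfty_cocycle hT1' hT2 hc2 f2.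
Qed.
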